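(* Let $\mu,\tau$ be partitions of $s$. There is a bijection between the set of terminal vertices of the tree $\mathscr T(\mu)$ labelled by $(\tau,\tau)$ and the set $\mathrm{SStd}_s(\tau,\mu)$ of semistandard Young tableaux of shape $\tau$ and weight $\mu$.
   Context: A pair of partitions for $s$ is $(\tau^\sharp,\tau)$ with $\tau$ a composition of $s$ and $\tau^\sharp$ a partition with $\tau^\sharp_c\le\tau_c$ for all $c$. For such a pair and $c>1$: $r^m_c(\tau)$ is the composition obtained from $\tau$ by moving the last $m$ boxes of row $c$ to the end of row $c-1$; $a_c(\tau^\sharp)$ is obtained by adding one box at the end of row $c$ of $\tau^\sharp$ if the result is a partition, and otherwise the pair $(a_c(\tau^\sharp),\tau)$ is replaced by the symbol $(\varnothing,\varnothing)$. The rooted tree $\mathscr T(\mu)$ (for $\mu\vdash s$) has vertices labelled by pairs of partitions; labels $(\tau^\sharp,\tau)$ and $(\eta^\sharp,\tau)$ with $\tau^\sharp,\eta^\sharp$ differing only in the first row are identified, and one writes labels with $\tau^\sharp_1=\tau_1$. The root is labelled $((\mu_1),\mu)$. For a vertex labelled $(\tau^\sharp,\tau)\neq(\varnothing,\varnothing)$, if there is a minimal $1<c\le\ell(\mu)$ with $\tau^\sharp_c<\tau_c$ then the vertex has exactly two children, labelled $(\tau^\sharp,r^{\tau_c-\tau^\sharp_c}_c(\tau))$ and $(a_c(\tau^\sharp),\tau)$; otherwise ($\tau^\sharp=\tau$) the vertex is terminal. Vertices labelled $(\varnothing,\varnothing)$ are also leaves but are not counted as terminal vertices. A semistandard Young tableau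 of shape $\tau$ and weight $\mu$ is a filling of the Young diagram of $\tau$ with $\mu_1$ ones, $\mu_2$ twos, etc., weakly increasing along rows and strictly increasing down columns. *)

From mathcomp Require Import all_boot.
Set Implicit Arguments. Unset Strict Implicit. Unset Printing Implicit Defensive.

(* Sequences of naturals are read through [nth 0], so rows beyond the end are 0.
   Row indices are 0-based: paper row c corresponds to index c.-1. *)

Definition partition_of (s : nat) (l : seq nat) : bool :=
  [&& sorted geq l, all (fun x => 0 < x) l & sumn l == s].

(* partition possibly padded with trailing zeros (used for tau^sharp) *)
Definition is_partition0 (l : seq nat) : bool := sorted geq l.

(* labels of vertices of T(mu): a pair (tau^sharp, tau) or the symbol (empty,empty).
   All sequences are kept of length l(mu). *)
Inductive vlabel := Lab of seq nat & seq nat | EmptyLab.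

(* identification convention: write labels with tau^sharp_1 = tau_1 *)
Definition normalize (ts t : seq nat) : seq nat := set_nth 0 ts 0 (nth 0 t 0).

Definition rmove (c m : nat) (t : seq nat) : seq nat :=
  set_nth 0 (set_nth 0 t c (nth 0 t c - m)) c.-1 (nth 0 t c.-1 + m).

(* minimal 1 < c <= l(mu) (paper numbering) with tau^sharp_c < tau_c,
   returned as a 0-based index *)
Definition first_bad (L : nat) (ts t : seq nat) : option nat :=
  ohead [seq c <- iota 1 L.-1 | nth 0 ts c < nth 0 t c].

(* the two children: false = (ts, r^{t_c - ts_c}_c t), true = (a_c ts, t) *)
Definition child (b : bool) (c : nat) (ts t : seq nat) : vlabel :=
  if b then
    let ts' := incr_nth ts c in
    if is_partition0 ts' then Lab ts' t else EmptyLab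
  else
    let t' := rmove c (nth 0 t c - nth 0 ts c) t in
    Lab (normalize ts t') t'.

(* vertices of the tree are addressed by paths (seq bool) from the root;
   [follow L v p] is the label of the vertex reached along p from a vertex
   labelled v, or None if there is no such vertex *)
Fixpoint follow (L : nat) (v : vlabel) (p : seq bool) : option vlabel :=
  match p with
  | [::] => Some v
  | b :: p' =>
    match v with
    | EmptyLab => None
    | Lab ts t =>
      match first_bad L ts t with
      | None => None
      | Some c => follow L (child b c ts t) p'
      end
    end
  end.

Definition root_label (mu : seq nat) : vlabel :=
  Lab (nth 0 mu 0 :: nseq (size mu).-1 0) mu.

Definition vertex_label (mu : seq nat) (p : seq bool) : option vlabel :=
  follow (size mu) (root_label mu) p.

Definition eq_comp (a b : seq nat) : bool :=
  all (fun i => nth 0 a i == nth 0 b i) (iota 0 (maxn (size a) (size b))).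

Definition terminal_tt (mu tau : seq nat) (p : seq bool) : bool :=
  match vertex_label mu p with
  | Some (Lab ts t) =>
      (first_bad (size mu) ts t == None) && eq_comp ts tau && eq_comp t tau
  | _ => false
  end.

Definition is_ssyt (tau mu : seq nat) (T : seq (seq nat)) : bool :=
  [&& map size T == tau,
      all (sorted leq) T,
      all (fun i => all (fun j => nth 0 (nth [::] T i) j < nth 0 (nth [::] T i.+1) j)
                        (iota 0 (size (nth [::] T i.+1))))
          (iota 0 (size T)) &
      all (fun x => count_mem x (flatten T) == (if x is k.+1 then nth 0 mu k else 0))
          (iota 0 (sumn mu).+1 ++ flatten T)].

Definition terminal_vertex (mu tau : seq nat) := {p : seq bool | terminal_tt mu tau p}.
Definition SStd (tau mu : seq nat) := {T : seq (seq nat) | is_ssyt tau mu T}.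

From Pilot Require Import Defs.
From mathcomp Require Import all_boot zify.
Set Implicit Arguments. Unset Strict Implicit. Unset Printing Implicit Defensive.

(** Describe a vertex of the tree by the partition [k] of the boxes placed so
   far (all boxes of weight at most [v] and some of weight [v + 1]) and by the
   row [r] at the end of which the [m] remaining boxes of weight [v + 1] sit.
   Its two children fix one more of these boxes in row [r], or push all of them
   up to row [r - 1].  Hence the terminal vertices below it correspond to the
   ways of completing [k] by a horizontal strip of [m] boxes in the rows
   [<= r], followed by horizontal strips of [mu_(v+2)], [mu_(v+3)], ... boxes,
   ending at [tau].  At the root these are the chains of partitions
   [0 = k^0 < k^1 < ... < k^l = tau] in which [k^i / k^(i-1)] is a horizontal
   strip of [mu_i] boxes (Gelfand-Tsetlin patterns), and such a chain is a
   semistandard tableau of shape [tau] and weight [mu] in disguise: [k^i] is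
   the shape filled by its entries [<= i]. *)

(** * Bijections between predicates *)

Definition pred_bij X Y (P : pred X) (Q : pred Y) :=
  exists (f : X -> Y) (g : Y -> X),
    [/\ forall x, P x -> Q (f x), forall y, Q y -> P (g y),
        forall x, P x -> g (f x) = x & forall y, Q y -> f (g y) = y].

Section PredBij.
Variables X Y Z : Type.
Implicit Types (P : pred X) (Q : pred Y).

Lemma pred_bij_sym P Q : pred_bij P Q -> pred_bij Q P.
Proof. by move=> [f [g [PQ QP gK fK]]]; exists g, f. Qed.

Lemma pred_bij_trans P Q (R : pred Z) : pred_bij P Q -> pred_bij Q R -> pred_bij P R.
Proof.
move=> [f [g [PQ QP gK fK]]] [f' [g' [QR RQ gK' fK']]].
exists (f' \o f), (g \o g'); split => /=.
- by move=> x /PQ /QR.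
- by move=> z /RQ /QP.
- by move=> x Px; rewrite gK' ?gK //; apply: PQ.
- by move=> z Rz; rewrite fK ?fK' //; apply: RQ.
Qed.

Lemma eq_pred_bij P P' Q Q' : P =1 P' -> Q =1 Q' -> pred_bij P Q -> pred_bij P' Q'.
Proof.
move=> eP eQ [f [g [PQ QP gK fK]]]; exists f, g; split => [x|y|x|y].
- by rewrite -eP -eQ; apply: PQ.
- by rewrite -eP -eQ; apply: QP.
- by rewrite -eP; apply: gK.
- by rewrite -eQ; apply: fK.
Qed.

Lemma pred_bij0 (x0 : X) (y0 : Y) P Q : P =1 pred0 -> Q =1 pred0 -> pred_bij P Q.
Proof.
by move=> eP eQ; exists (fun=> y0), (fun=> x0); split=> ?; rewrite ?eP ?eQ.
Qed.

Lemma pred_bij_sig P Q : pred_bij P Q -> exists f : {x | P x} -> {y | Q y}, bijective f.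
Proof.
move=> [f [g [PQ QP gK fK]]].
exists (fun x => exist _ (f (sval x)) (PQ _ (svalP x))).
exists (fun y => exist _ (g (sval y)) (QP _ (svalP y))).
- case=> x Px /=; move: (QP _ _); rewrite gK // => Px'.
  by rewrite (bool_irrelevance Px' Px).
- case=> y Qy /=; move: (PQ _ _); rewrite fK // => Qy'.
  by rewrite (bool_irrelevance Qy' Qy).
Qed.

End PredBij.

Lemma pred_bij1 (X Y : eqType) (a : X) (c : Y) (b : bool) :
  pred_bij (fun x => (x == a) && b) (fun y => (y == c) && b).
Proof.
exists (fun=> c), (fun=> a); split.
- by move=> x /andP[_ ->]; rewrite eqxx.
- by move=> y /andP[_ ->]; rewrite eqxx.
- by move=> x /andP[/eqP -> _].
- by move=> y /andP[/eqP -> _].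
Qed.

Lemma pred_bij_cons X (Y : eqType) (P : pred X) (Q : pred (seq Y)) (a : Y) :
  pred_bij P Q -> pred_bij P (fun s => if s is b :: s' then (b == a) && Q s' else false).
Proof.
move=> [f [g [PQ QP gK fK]]].
exists (fun x => a :: f x), (fun s => g (behead s)); split.
- by move=> x Px; rewrite eqxx PQ.
- by case=> // b s /andP[_ /QP].
- by move=> x Px /=; rewrite gK.
- by case=> // b s /andP[/eqP -> Qs] /=; rewrite fK.
Qed.

Lemma pred_bij_branch Y (P Pt Pf : pred (seq bool)) (Q Qt Qf : pred Y) :
  P [::] = false -> (forall p, P (true :: p) = Pt p) -> (forall p, P (false :: p) = Pf p) ->
  (forall y, Q y = Qt y || Qf y) -> (forall y, Qt y -> Qf y -> False) ->
  pred_bij Pt Qt -> pred_bij Pf Qf -> pred_bij P Q.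
Proof.
move=> P0 PtE PfE QE Qdisj [ft [gt [A1 A2 A3 A4]]] [ff [gf [B1 B2 B3 B4]]].
exists (fun p => if p is b :: p' then (if b then ft p' else ff p') else ft [::]).
exists (fun y => if Qt y then true :: gt y else false :: gf y); split.
- by case=> [|[] p]; rewrite ?P0 ?PtE ?PfE // => Pp; rewrite QE ?A1 ?B1 ?orbT.
- move=> y; rewrite QE; case: ifP => [Qty _|_ /= Qfy]; first by rewrite PtE A2.
  by rewrite PfE B2.
- case=> [|[] p]; rewrite ?P0 ?PtE ?PfE // => Pp; first by rewrite A1 // A3.
  case: ifP => [Qtp|_]; last by rewrite B3.
  by case: (Qdisj _ Qtp (B1 _ Pp)).
- move=> y; rewrite QE; case: ifP => [Qty _|_ /= Qfy]; first by rewrite A4.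
  by rewrite B4.
Qed.

Lemma sumn_set_nth_add (s : seq nat) i x : i < size s ->
  sumn (set_nth 0 s i x) + nth 0 s i = sumn s + x.
Proof. by elim: s i => [|a s IHs] [|i] //= lt_i_s; [lia | have := IHs i lt_i_s; lia]. Qed.

Lemma sumn_incr_nth (s : seq nat) i : i < size s -> sumn (incr_nth s i) = (sumn s).+1.
Proof. by elim: s i => [|a s IHs] [|i] //= lt_i_s; rewrite ?IHs //; lia. Qed.

Lemma sumn_leq (s t : seq nat) : size s = size t ->
  (forall j, nth 0 s j <= nth 0 t j) -> sumn s <= sumn t.
Proof.
elim: s t => [|x s IHs] [|y t] //= [eq_st] le_st.
by apply: leq_add (le_st 0) (IHs t eq_st (fun j => le_st j.+1)).
Qed.

Lemma eq_from_sumn (s t : seq nat) : size s = size t ->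
  (forall j, nth 0 s j <= nth 0 t j) -> sumn s = sumn t -> s = t.
Proof.
elim: s t => [|x s IHs] [|y t] //= [eq_st] le_st sum_st.
have le_xy := le_st 0; have le_s_t := sumn_leq eq_st (fun j => le_st j.+1).
have eq_xy : x = y by move: le_xy sum_st le_s_t => /=; lia.
by rewrite eq_xy (IHs t eq_st (fun j => le_st j.+1)) //; lia.
Qed.

Lemma set_nth_id (s : seq nat) i : i < size s -> set_nth 0 s i (nth 0 s i) = s.
Proof.
move=> lt_i_s; apply: (@eq_from_nth _ 0); rewrite size_set_nth; first lia.
by move=> j _; rewrite nth_set_nth /=; case: eqP => // ->.
Qed.

Lemma sorted_geq_nth_pred (s : seq nat) j : sorted geq s -> 0 < j < size s ->
  nth 0 s j <= nth 0 s j.-1.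
Proof. by move=> /(sortedP 0) s_geq; case: j => // j /andP[_ /s_geq]. Qed.

Lemma sorted_geq_incr_nth (s : seq nat) r : sorted geq s -> 0 < r < size s ->
  nth 0 s r < nth 0 s r.-1 -> sorted geq (incr_nth s r).
Proof.
move=> /(sortedP 0) s_geq lt_r lt_s_r; apply/(sortedP 0) => i.
rewrite size_incr_nth ifT ?nth_incr_nth; last lia.
move=> lt_i; have := s_geq i lt_i.
by have [r_eq|] := eqVneq r i.+1; [subst r; move: lt_s_r => /=| ]; lia.
Qed.

Lemma sorted_geq_add_head (s : seq nat) m : sorted geq s -> 0 < size s ->
  sorted geq (set_nth 0 s 0 (nth 0 s 0 + m)).
Proof.
move=> /(sortedP 0) s_geq s_gt0; apply/(sortedP 0) => i; rewrite size_set_nth => lt_i.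
by rewrite !nth_set_nth /=; have := s_geq i; case: i lt_i => [|i] /=; lia.
Qed.

Lemma eq_compP (a b : seq nat) : reflect (nth 0 a =1 nth 0 b) (Defs.eq_comp a b).
Proof.
apply: (iffP allP) => [eq_ab i|eq_ab i _]; last by rewrite eq_ab.
have [lt_i|le_i] := ltnP i (maxn (size a) (size b)); first by apply/eqP/eq_ab; rewrite mem_iota.
by rewrite !nth_default //; lia.
Qed.

Lemma size_leq_sumn (s : seq nat) : all (fun x => 0 < x) s -> size s <= sumn s.
Proof. by elim: s => //= x s IHs /andP[x_gt0 /IHs]; lia. Qed.

Ltac decide_ifs := repeat match goal with
  | |- context[if ?b then _ else _] =>
    assert_fails (constr_eq b true); assert_fails (constr_eq b false);
    (rewrite (_ : b = true); last lia) || (rewrite (_ : b = false); last lia)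
  | |- context[?a == ?b] => match type of a with nat => idtac end;
    (rewrite (_ : (a == b) = true); last lia) || (rewrite (_ : (a == b) = false); last lia)
  end.

Ltac lia_ifs := decide_ifs; rewrite /= ?mul0n ?mul1n ?muln0 ?addn0 ?add0n; try lia.

(** * Terminal vertices and chains of horizontal strips *)

Section TreeChains.
Variables mu tau : seq nat.
Local Notation L := (size mu).

Definition terminal_below (S : vlabel) (p : seq bool) : bool :=
  if follow L S p is Some (Lab ts t) then
    (first_bad L ts t == None) && Defs.eq_comp ts tau && Defs.eq_comp t tau
  else false.

Definition hstrip (k : seq nat) (r m : nat) (l : seq nat) : bool :=
  [&& size l == L,
      all (fun j => [&& (r < j) ==> (nth 0 l j == nth 0 k j),
                        (j <= r) ==> (nth 0 k j <= nth 0 l j) &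
                        (0 < j <= r) ==> (nth 0 l j <= nth 0 k j.-1)]) (iota 0 L)
    & sumn l == sumn k + m].

Fixpoint strip_chain (k : seq nat) (w : nat) (G : seq (seq nat)) : bool :=
  if G is l :: G' then [&& w < L, hstrip k w (nth 0 mu w) l & strip_chain l w.+1 G']
  else (w == L) && Defs.eq_comp k tau.

Definition partial_chain (k : seq nat) (v r m : nat) (G : seq (seq nat)) : bool :=
  if G is l :: G' then hstrip k r m l && strip_chain l v.+1 G' else false.

(* The label of a vertex as in the header, with weights and rows indexed from
   [0]: row [r] holds [m] boxes of weight [v] on top of [k]; rows after [v]
   still hold their [mu] boxes. *)
Definition comp_label (k : seq nat) (v r m : nat) : seq nat :=
  mkseq (fun j => if v < j then nth 0 mu j else nth 0 k j + (j == r) * m) L.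

Definition tree_state (k : seq nat) (v r m : nat) :=
  [/\ size k = L, sorted geq k, forall j, v < j -> nth 0 k j = 0, r <= v < L
    & 0 < m -> 0 < r].

Local Notation tree_bij k v r m :=
  (pred_bij (terminal_below (Lab k (comp_label k v r m))) (partial_chain k v r m)).

Lemma hstripP k r m l :
  reflect [/\ size l = L,
     forall j, j < L -> [/\ r < j -> nth 0 l j = nth 0 k j,
                           j <= r -> nth 0 k j <= nth 0 l j &
                           0 < j <= r -> nth 0 l j <= nth 0 k j.-1]
     & sumn l = sumn k + m] (hstrip k r m l).
Proof.
apply: (iffP and3P) => [[/eqP size_l /allP strip /eqP sum_l]|[size_l strip sum_l]].
  split=> // j lt_jL; have /strip/and3P[h1 h2 h3] : j \in iota 0 L by rewrite mem_iota.
  by split=> [/(implyP h1)/eqP|/(implyP h2)|/(implyP h3)].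
split; [exact/eqP | | exact/eqP].
apply/allP => j; rewrite mem_iota => /= /strip[h1 h2 h3].
by apply/and3P; split; apply/implyP => // /h1 ->.
Qed.

Lemma hstrip0 k r l : sorted geq k -> size k = L -> r < L -> hstrip k r 0 l = (l == k).
Proof.
move=> k_geq size_k lt_rL; apply/idP/eqP => [/hstripP[size_l strip sum_l]|->].
  apply/esym/eq_from_sumn; [lia | move=> j | lia].
  have [lt_jL|] := ltnP j L; last by move=> le_Lj; rewrite nth_default ?size_k.
  by have [h1 h2 _] := strip j lt_jL; have [/h2|/h1 ->] := leqP j r.
apply/hstripP; split=> // [j lt_jL|]; last by rewrite addn0.
by split=> // /andP[j_gt0 _]; apply: sorted_geq_nth_pred; rewrite ?size_k ?j_gt0.
Qed.

Lemma terminal_below_nil ts t : terminal_below (Lab ts t) [::] =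
  (first_bad L ts t == None) && Defs.eq_comp ts tau && Defs.eq_comp t tau.
Proof. by []. Qed.

Lemma terminal_below_cons ts t b p : terminal_below (Lab ts t) (b :: p) =
  if first_bad L ts t is Some c then terminal_below (child b c ts t) p else false.
Proof. by rewrite /terminal_below /=; case: first_bad. Qed.

Lemma terminal_below_empty p : terminal_below EmptyLab p = false.
Proof. by case: p. Qed.

Lemma first_bad_some ts t r : 0 < r < L ->
  (forall c, 0 < c < r -> nth 0 t c <= nth 0 ts c) -> nth 0 ts r < nth 0 t r ->
  first_bad L ts t = Some r.
Proof.
move=> /andP[r_gt0 lt_rL] good bad_r; rewrite /first_bad.
have -> : iota 1 L.-1 = iota 1 r.-1 ++ iota r (L - r).
  by rewrite (_ : L.-1 = r.-1 + (L - r)); [rewrite iotaD (_ : 1 + r.-1 = r) // | ]; lia.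
rewrite filter_cat (eq_in_filter (a2 := pred0)) ?filter_pred0 /=.
  by case E: (L - r) => [|n]; [lia | rewrite /= bad_r].
move=> c; rewrite mem_iota => lt_c /=; apply/negbTE; rewrite -leqNgt; apply: good; lia.
Qed.

Lemma first_bad_none ts t :
  (forall c, 0 < c < L -> nth 0 t c <= nth 0 ts c) -> first_bad L ts t = None.
Proof.
move=> good; rewrite /first_bad (eq_in_filter (a2 := pred0)) ?filter_pred0 //.
move=> c; rewrite mem_iota => lt_c /=; apply/negbTE; rewrite -leqNgt; apply: good; lia.
Qed.

Lemma nth_comp_label k v r m j : j < L ->
  nth 0 (comp_label k v r m) j = if v < j then nth 0 mu j else nth 0 k j + (j == r) * m.
Proof. exact: nth_mkseq. Qed.

Lemma size_comp_label k v r m : size (comp_label k v r m) = L.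
Proof. exact: size_mkseq. Qed.

Lemma comp_label_next k v r : v.+1 < L -> nth 0 k v.+1 = 0 ->
  comp_label k v r 0 = comp_label k v.+1 v.+1 (nth 0 mu v.+1).
Proof.
move=> lt_vL k_v; apply: eq_mkseq => j /=; rewrite muln0 addn0.
have [->|ne_jv] := eqVneq j v.+1; first by decide_ifs; rewrite k_v mul1n.
by have [le_jv|lt_vj] := leqP j v; decide_ifs; rewrite ?(negbTE ne_jv) ?addn0.
Qed.

Lemma child_true_comp_label k v r m :
  child true r k (comp_label k v r m.+1) =
  if sorted geq (incr_nth k r) then Lab (incr_nth k r) (comp_label (incr_nth k r) v r m)
  else EmptyLab.
Proof.
rewrite /child /is_partition0.
suff -> : comp_label k v r m.+1 = comp_label (incr_nth k r) v r m by [].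
apply: eq_mkseq => j /=; rewrite nth_incr_nth; case: ifP => // _.
by have [->|_] := eqVneq j r; rewrite ?mul1n ?mul0n; lia.
Qed.

Lemma child_false_comp_label k v r m : size k = L -> 0 < r < v -> v < L ->
  child false r.+1 k (comp_label k v r.+1 m) = Lab k (comp_label k v r m).
Proof.
move=> size_k lt_r lt_vL; rewrite /child.
have -> : nth 0 (comp_label k v r.+1 m) r.+1 - nth 0 k r.+1 = m.
  by rewrite nth_comp_label; lia_ifs.
have -> : rmove r.+1 m (comp_label k v r.+1 m) = comp_label k v r m.
  apply: (@eq_from_nth _ 0); rewrite /rmove !size_set_nth !size_comp_label; first lia.
  move=> j lt_jL; rewrite !nth_set_nth /= !nth_set_nth /= !nth_comp_label //; try lia.
  have [->|ne_jr] := eqVneq j r; first by lia_ifs.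
  have [->|ne_jr1] := eqVneq j r.+1; first by lia_ifs.
  by have [|] := leqP j v; decide_ifs; rewrite ?(negbTE ne_jr) ?(negbTE ne_jr1).
rewrite /normalize nth_comp_label; last lia.
by lia_ifs; rewrite set_nth_id //; lia.
Qed.

Lemma child_false_comp_label_top k v m : size k = L -> 0 < v < L ->
  child false 1 k (comp_label k v 1 m) =
  Lab (set_nth 0 k 0 (nth 0 k 0 + m)) (comp_label (set_nth 0 k 0 (nth 0 k 0 + m)) v 0 0).
Proof.
move=> size_k lt_v; rewrite /child.
have -> : nth 0 (comp_label k v 1 m) 1 - nth 0 k 1 = m by rewrite nth_comp_label; lia_ifs.
have -> : rmove 1 m (comp_label k v 1 m) = comp_label (set_nth 0 k 0 (nth 0 k 0 + m)) v 0 0.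
  apply: (@eq_from_nth _ 0); rewrite /rmove !size_set_nth !size_comp_label; first lia.
  move=> j lt_jL; rewrite !nth_set_nth /= !nth_set_nth /= !nth_comp_label ?nth_set_nth //=; try lia.
  by case: j lt_jL => [|[|j]] lt_jL; lia_ifs.
by rewrite /normalize nth_comp_label; [lia_ifs; rewrite nth_set_nth | lia].
Qed.

Lemma hstrip_head_ge k r m l : r < L -> hstrip k r m l -> nth 0 k r <= nth 0 l r.
Proof. by move=> lt_rL /hstripP[_ strip _]; have [_ /(_ (leqnn r)) ? _] := strip r lt_rL. Qed.

Lemma hstrip_incr k r m l : 0 < r < L -> size k = L ->
  hstrip k r m.+1 l && (nth 0 k r < nth 0 l r) = hstrip (incr_nth k r) r m l.
Proof.
move=> lt_r size_k; apply/idP/idP.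
  case/andP=> /hstripP[size_l strip sum_l] lt_k_l; apply/hstripP; split=> //.
    move=> j lt_jL; have [h1 h2 h3] := strip j lt_jL; rewrite !nth_incr_nth; split.
    - by move=> lt_rj; rewrite h1 // (_ : (r == j) = false) //; lia.
    - by move=> le_jr; have [<-|] := eqVneq r j; [lia | have := h2 le_jr; lia].
    - by move=> lt_j; rewrite (_ : (r == j.-1) = false); [apply: h3 | lia].
  by rewrite sumn_incr_nth; lia.
case/hstripP=> size_l strip sum_l; rewrite sumn_incr_nth in sum_l; last lia.
apply/andP; split; last first.
  by have [_ /(_ (leqnn r)) + _] := strip r (andP lt_r).2; rewrite nth_incr_nth eqxx.
apply/hstripP; split=> // [j lt_jL|]; last lia.
have [+ + +] := strip j lt_jL; rewrite !nth_incr_nth => h1 h2 h3; split.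
- by move=> lt_rj; rewrite h1 // (_ : (r == j) = false) //; lia.
- by move=> le_jr; have := h2 le_jr; lia.
- by move=> lt_j; have := h3 lt_j; rewrite (_ : (r == j.-1) = false) //; lia.
Qed.

Lemma hstrip_incr_sorted k r m l : sorted geq k -> 0 < r < L -> size k = L ->
  hstrip k r m l -> nth 0 k r < nth 0 l r -> sorted geq (incr_nth k r).
Proof.
move=> k_geq lt_r size_k /hstripP[_ strip _] lt_k_l.
have [_ _ le_l_k] := strip r (andP lt_r).2.
apply: sorted_geq_incr_nth; rewrite ?size_k //.
by apply: leq_trans lt_k_l (le_l_k _); lia.
Qed.

Lemma hstrip_shift k r m l : sorted geq k -> size k = L -> 0 < r -> r.+1 < L ->
  hstrip k r.+1 m l && (nth 0 l r.+1 == nth 0 k r.+1) = hstrip k r m l.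
Proof.
move=> k_geq size_k r_gt0 lt_rL; apply/idP/idP.
  case/andP=> /hstripP[size_l strip sum_l] /eqP eq_r1; apply/hstripP; split=> //.
  move=> j lt_jL; have [h1 h2 h3] := strip j lt_jL; split.
  - by move=> lt_rj; have [<-|] := eqVneq r.+1 j; last by move=> ?; apply: h1; lia.
  - by move=> le_jr; apply: h2; lia.
  - by move=> lt_j; apply: h3; lia.
case/hstripP=> size_l strip sum_l; apply/andP; split; last first.
  by have [/(_ (ltnSn r)) -> _ _] := strip r.+1 lt_rL.
apply/hstripP; split=> // j lt_jL; have [h1 h2 h3] := strip j lt_jL; split.
- by move=> lt_rj; apply: h1; lia.
- by move=> le_jr; have [eq_j|?] := eqVneq r.+1 j; [subst j; rewrite h1 | apply: h2]; lia.
- move=> lt_j; have [eq_j|?] := eqVneq r.+1 j; last by apply: h3; lia.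
  by subst j; rewrite h1 //; apply: sorted_geq_nth_pred; rewrite ?size_k.
Qed.

Lemma hstrip_top k m l : sorted geq k -> size k = L -> 1 < L ->
  hstrip k 1 m l && (nth 0 l 1 == nth 0 k 1) = (l == set_nth 0 k 0 (nth 0 k 0 + m)).
Proof.
move=> k_geq size_k lt_1L; apply/idP/eqP.
  case/andP=> /hstripP[size_l strip sum_l] /eqP eq_1.
  have eq_tail j : 0 < j -> nth 0 l j = nth 0 k j.
    move=> j_gt0; have [lt_jL|?] := ltnP j L; last by rewrite !nth_default //; lia.
    by have [h1 _ _] := strip j lt_jL; have [<-|?] := eqVneq 1 j; [|apply: h1; lia].
  have eq_set0 : set_nth 0 l 0 0 = set_nth 0 k 0 0.
    apply: (@eq_from_nth _ 0); rewrite !size_set_nth; first lia.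
    by move=> [|j] _; rewrite !nth_set_nth //= eq_tail.
  have eq_head : nth 0 l 0 = nth 0 k 0 + m.
    have := @sumn_set_nth_add l 0 0; have := @sumn_set_nth_add k 0 0.
    by rewrite eq_set0; lia.
  apply: (@eq_from_nth _ 0); rewrite ?size_set_nth; first lia.
  by move=> [|j] _; rewrite nth_set_nth //= eq_tail.
move=> ->; apply/andP; split; last by rewrite nth_set_nth.
apply/hstripP; split; first by rewrite size_set_nth; lia.
  move=> j lt_jL; rewrite !nth_set_nth /=.
  split; case: j lt_jL => [|[|j]] lt_jL //=; try lia.
  by move=> _; apply: sorted_geq_nth_pred; rewrite ?size_k.
by have := @sumn_set_nth_add k 0 (nth 0 k 0 + m); lia.
Qed.

Lemma strip_chain_next k v G : v.+1 < L ->
  strip_chain k v.+1 G = partial_chain k v.+1 v.+1 (nth 0 mu v.+1) G.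
Proof. by case: G => [|l G] lt_vL /=; rewrite ?lt_vL // (_ : (v.+1 == L) = false); lia. Qed.

Lemma strip_chain_last k v G : v.+1 = L ->
  strip_chain k v.+1 G = (G == [::]) && Defs.eq_comp k tau.
Proof. by case: G => [|l G] /= ->; rewrite ?eqxx ?ltnn. Qed.

Lemma partial_chain0 k v r G : sorted geq k -> size k = L -> r < L ->
  partial_chain k v r 0 G = if G is l :: G' then (l == k) && strip_chain k v.+1 G' else false.
Proof. by case: G => [|l G] //= k_geq size_k lt_rL; rewrite hstrip0 //; case: eqP => // ->. Qed.

Lemma tree_state_next k v r m : tree_state k v r 0 -> v.+1 < L -> tree_state k v.+1 v.+1 m.
Proof.
case=> size_k k_geq k_0 _ _ lt_vL; split=> //; last lia.
by move=> j lt_vj; apply: k_0; lia.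
Qed.

Lemma tree_state_incr k v r m : tree_state k v r m.+1 -> sorted geq (incr_nth k r) ->
  tree_state (incr_nth k r) v r m.
Proof.
case=> size_k _ k_0 lt_r r_gt0 k'_geq; split=> // [|j lt_vj|_]; last exact: r_gt0.
  by rewrite size_incr_nth size_k ifT //; lia.
by rewrite nth_incr_nth k_0 // (_ : (r == j) = false) //; lia.
Qed.

Lemma tree_state_shift k v r m : tree_state k v r.+2 m -> tree_state k v r.+1 m.
Proof. by case=> size_k k_geq k_0 lt_r _; split=> //; lia. Qed.

Lemma tree_state_top k v m : tree_state k v 1 m ->
  tree_state (set_nth 0 k 0 (nth 0 k 0 + m)) v 0 0.
Proof.
case=> size_k k_geq k_0 lt_r _; split=> //; first by rewrite size_set_nth size_k; lia.
- by apply: sorted_geq_add_head; rewrite ?size_k //; lia.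
- by move=> j lt_vj; rewrite nth_set_nth /= ifF ?k_0 //; lia.
- lia.
Qed.

Lemma tree_bij_last k v r : tree_state k v r 0 -> v.+1 = L -> tree_bij k v r 0.
Proof.
case=> size_k k_geq _ lt_r _ vL.
have -> : comp_label k v r 0 = k.
  apply: (@eq_from_nth _ 0) => [|j lt_j]; first by rewrite size_comp_label.
  by rewrite size_comp_label in lt_j; rewrite nth_comp_label //; lia_ifs.
have no_bad : first_bad L k k = None by apply: first_bad_none.
apply: (eq_pred_bij _ _ (pred_bij1 [::] [:: k] (Defs.eq_comp k tau))) => [p|G].
  by case: p => [|b p]; rewrite ?terminal_below_nil ?terminal_below_cons no_bad ?andbb.
rewrite partial_chain0 //; last lia.
by case: G => //= l G; rewrite strip_chain_last // eqseq_cons andbA.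
Qed.

Lemma tree_bij_next k v r : tree_state k v r 0 -> v.+1 < L ->
  tree_bij k v.+1 v.+1 (nth 0 mu v.+1) -> tree_bij k v r 0.
Proof.
move=> st lt_vL; have [size_k k_geq k_0 lt_r _] := st.
rewrite comp_label_next ?k_0 // => /(pred_bij_cons k); apply: eq_pred_bij => // G.
by rewrite partial_chain0 //; [case: G => //= l G; rewrite strip_chain_next | lia].
Qed.

Lemma tree_bij_true k v r m : tree_state k v r.+1 m.+1 ->
  (sorted geq (incr_nth k r.+1) -> tree_bij (incr_nth k r.+1) v r.+1 m) ->
  pred_bij (terminal_below (child true r.+1 k (comp_label k v r.+1 m.+1)))
           (fun G => partial_chain k v r.+1 m.+1 G && (nth 0 k r.+1 < nth 0 (head [::] G) r.+1)).
Proof.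
case=> size_k k_geq _ /andP[le_rv lt_vL] _ bij_incr.
rewrite child_true_comp_label; case: ifP => [k'_geq|k'_ngeq].
  apply: eq_pred_bij (bij_incr k'_geq) => // [[|l G]] //=.
  by rewrite andbAC -hstrip_incr //; lia.
apply: (pred_bij0 [::] [::]) => [p|[|l G] //=]; first exact: terminal_below_empty.
apply/negbTE/negP => /andP[/andP[strip _] lt_k_l].
by move: k'_ngeq; rewrite (hstrip_incr_sorted k_geq _ size_k strip lt_k_l) //; lia.
Qed.

Lemma tree_bij_node k v r m : tree_state k v r.+1 m.+1 ->
  pred_bij (terminal_below (child true r.+1 k (comp_label k v r.+1 m.+1)))
           (fun G => partial_chain k v r.+1 m.+1 G && (nth 0 k r.+1 < nth 0 (head [::] G) r.+1)) ->
  pred_bij (terminal_below (child false r.+1 k (comp_label k v r.+1 m.+1)))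
           (fun G => partial_chain k v r.+1 m.+1 G && (nth 0 (head [::] G) r.+1 == nth 0 k r.+1)) ->
  tree_bij k v r.+1 m.+1.
Proof.
case=> _ _ _ /andP[le_rv lt_vL] _ bij_true bij_false.
have bad : first_bad L k (comp_label k v r.+1 m.+1) = Some r.+1.
  by apply: first_bad_some => [|c lt_c|]; rewrite ?nth_comp_label; lia_ifs.
apply: (pred_bij_branch _ _ _ _ _ bij_true bij_false) => [|p|p|G|G].
- by rewrite terminal_below_nil bad.
- by rewrite terminal_below_cons bad.
- by rewrite terminal_below_cons bad.
- case: G => [|l G] //=; have [strip|] //= := boolP (hstrip k r.+1 m.+1 l).
  case: (strip_chain _ _ _) => //=.
  by rewrite orbC eq_sym -leq_eqVlt (hstrip_head_ge _ strip) //; lia.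
- by case/andP=> _ lt_r /andP[_ /eqP eq_r]; lia.
Qed.

Lemma tree_bij_false k v r m : tree_state k v r.+2 m -> tree_bij k v r.+1 m ->
  pred_bij (terminal_below (child false r.+2 k (comp_label k v r.+2 m)))
           (fun G => partial_chain k v r.+2 m G && (nth 0 (head [::] G) r.+2 == nth 0 k r.+2)).
Proof.
case=> size_k k_geq _ lt_r _; rewrite child_false_comp_label //; try lia.
apply: eq_pred_bij => // [[|l G]] //=.
by rewrite andbAC hstrip_shift //; lia.
Qed.

Lemma tree_bij_false_top k v m : tree_state k v 1 m ->
  tree_bij (set_nth 0 k 0 (nth 0 k 0 + m)) v 0 0 ->
  pred_bij (terminal_below (child false 1 k (comp_label k v 1 m)))
           (fun G => partial_chain k v 1 m G && (nth 0 (head [::] G) 1 == nth 0 k 1)).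
Proof.
case=> size_k k_geq _ lt_r _; rewrite child_false_comp_label_top //; try lia.
apply: eq_pred_bij => // [[|l G]] //=.
rewrite andbAC hstrip_top // ?hstrip0 //; try lia.
- by apply: sorted_geq_add_head; rewrite ?size_k; lia.
- by rewrite size_set_nth size_k; lia.
Qed.

Lemma terminal_below_bij k v r m : tree_state k v r m -> tree_bij k v r m.
Proof.
(* The [true] child lowers [m], the [false] child lowers [r], and [m = 0] passes
   to the next weight. *)
move: {2}(L - v) (leqnn (L - v)) => n.
elim: n k v r m => [|n IHn] k v r m le_n st; first by case: st => _ _ _ /andP[_ ?]; lia.
have bij0 r' k' : tree_state k' v r' 0 -> tree_bij k' v r' 0.
  move=> st'; have [lt_vL|le_Lv] := ltnP v.+1 L.
    by apply: (tree_bij_next st' lt_vL); apply: IHn (tree_state_next _ st' lt_vL); lia.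
  by apply: (tree_bij_last st'); case: st' => _ _ _ /andP[_ ?] _; lia.
elim: r k m st => [|r IHr] k m st.
  by case: m st => [|m] st; [exact: bij0 | case: st => _ _ _ _ /(_ isT)].
elim: m k st => [|m IHm] k st; first exact: bij0.
apply: tree_bij_node => //; first by apply: tree_bij_true => // k'_geq; exact/IHm/tree_state_incr.
case: r IHr IHm st => [|r] IHr _ st; first exact/tree_bij_false_top/IHr/tree_state_top.
exact/tree_bij_false/IHr/tree_state_shift.
Qed.
End TreeChains.

Definition count_le (w : nat) (s : seq nat) : nat := count (fun x => x <= w) s.

Lemma count_leS w s : count_le w.+1 s = count_le w s + count_mem w.+1 s.
Proof. by rewrite /count_le; elim: s => //= x s ->; case: (ltngtP x w.+1); lia. Qed.

Lemma count_le0 s : count_le 0 s = count_mem 0 s.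
Proof. by apply: eq_count => x /=; rewrite leqn0. Qed.

Lemma leq_count_le w w' s : w <= w' -> count_le w s <= count_le w' s.
Proof. by move=> le_ww'; apply: sub_count => x /= /leq_trans; apply. Qed.

Lemma count_le_eq0 w s : (forall x, x \in s -> w < x) -> count_le w s = 0.
Proof.
by move=> gt_s; apply/eqP; rewrite -leqn0 leqNgt -has_count; apply/hasPn => x /gt_s /=; lia.
Qed.

Lemma count_le_size w s : (forall x, x \in s -> x <= w) -> count_le w s = size s.
Proof. by move=> le_s; apply/eqP; rewrite -all_count; apply/allP. Qed.

Lemma count_le_sorted w s p : sorted leq s ->
  (p < count_le w s) = (p < size s) && (nth 0 s p <= w).
Proof.
rewrite /count_le; elim: s p => [|x s IHs] p //= s_sorted.
have x_min := allP (order_path_min leq_trans s_sorted).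
have [le_xw|lt_wx] := leqP x w.
  by case: p => [|p] //=; rewrite add1n ltnS IHs // (path_sorted s_sorted).
have -> : count (fun y => y <= w) s = 0 by apply: count_le_eq0 => y /x_min /=; lia.
case: p => [|p] /=; first lia.
rewrite addn0 ltnS; case: (ltnP p (size s)) => lt_p //=.
by apply/esym/negbTE; rewrite -ltnNge (leq_trans lt_wx (x_min _ (mem_nth 0 lt_p))).
Qed.

Section ColumnStrict.
Variables a b : seq nat.
Hypotheses (a_sorted : sorted leq a) (b_sorted : sorted leq b).

Lemma count_le_col_strict w : size b <= size a ->
  (forall p, p < size b -> nth 0 a p < nth 0 b p) -> count_le w.+1 b <= count_le w a.
Proof.
move=> le_ba col_ab; case E: (count_le w.+1 b) => [|n] //.
have : n < count_le w.+1 b by rewrite E.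
rewrite count_le_sorted // => /andP[lt_n le_bn].
by have : n < count_le w a; rewrite // count_le_sorted //; have := col_ab n lt_n; lia.
Qed.

Lemma col_strict_count_le : (forall w, count_le w.+1 b <= count_le w a) ->
  (forall x, x \in b -> 0 < x) ->
  forall p, p < size b -> p < size a /\ nth 0 a p < nth 0 b p.
Proof.
move=> le_count b_pos p lt_p; have b_p_gt0 := b_pos _ (mem_nth 0 lt_p).
have : p < count_le (nth 0 b p) b by rewrite count_le_sorted // lt_p leqnn.
rewrite -(prednK b_p_gt0) => /leq_trans/(_ (le_count _)).
by rewrite count_le_sorted // => /andP[-> ?]; lia.
Qed.

End ColumnStrict.

Lemma sumn_mkseq_delta f c n :
  sumn (mkseq (fun i => (i == c) * f i) n) = if c < n then f c else 0.
Proof.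
elim: n => [|n IHn] //; rewrite mkseqS sumn_rcons IHn.
have [->|ne_nc] := eqVneq n c; first by rewrite ltnn ltnSn add0n mul1n.
by rewrite mul0n addn0 ltnS [c <= n]leq_eqVlt [c == n]eq_sym (negbTE ne_nc).
Qed.

Lemma sumn_mkseq_sub f g n : (forall j, j < n -> g j <= f j) ->
  sumn (mkseq (fun j => f j - g j) n) = sumn (mkseq f n) - sumn (mkseq g n).
Proof.
elim: n => [|n IHn] // le_gf; rewrite !mkseqS !sumn_rcons IHn => [|j lt_j]; last first.
  by apply: le_gf; lia.
have : sumn (mkseq g n) <= sumn (mkseq f n).
  apply: sumn_leq => [|j]; first by rewrite !size_mkseq.
  have [lt_j|le_j] := ltnP j n; last by rewrite !nth_default ?size_mkseq.
  by rewrite !nth_mkseq //; apply: le_gf; lia.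
by have := le_gf n (ltnSn n); lia.
Qed.

Lemma sumn_mkseq_widen f n m : n <= m -> (forall j, n <= j -> f j = 0) ->
  sumn (mkseq f m) = sumn (mkseq f n).
Proof.
move=> le_nm f_0; elim: m le_nm => [|m IHm] le_nm; first by have -> : n = 0 by lia.
have [lt_nm|gt_nm|->] // := ltngtP n m.+1; last lia.
by rewrite mkseqS sumn_rcons IHm ?f_0 ?addn0; lia.
Qed.

(** * Gelfand-Tsetlin patterns and semistandard tableaux *)

Section RootShape.
Variable mu : seq nat.
Local Notation L := (size mu).

Definition root_shape : seq nat := nth 0 mu 0 :: nseq L.-1 0.

Lemma size_root_shape : 0 < L -> size root_shape = L.
Proof. by rewrite /= size_nseq; case: L. Qed.

Lemma nth_root_shape j : nth 0 root_shape j = if j == 0 then nth 0 mu 0 else 0.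
Proof. by case: j => //= j; rewrite nth_nseq if_same. Qed.

Lemma root_shape_geq : sorted geq root_shape.
Proof. by apply/(sortedP 0) => i _; rewrite !nth_root_shape; case: i. Qed.

End RootShape.

Section Patterns.
Variables mu tau : seq nat.
Local Notation L := (size mu).
Local Notation root_shape := (root_shape mu).
Hypotheses (mu_pos : all (fun x => 0 < x) mu) (tau_pos : all (fun x => 0 < x) tau)
  (tau_geq : sorted geq tau) (L_gt0 : 0 < L).

(* Gelfand-Tsetlin patterns: [nth [::] G v] is the shape occupied by the entries
   [<= v.+1] of a tableau, padded with zeros to length [L]. *)
Definition gt_pattern (G : seq (seq nat)) :=
  [/\ size G = L, nth [::] G 0 = root_shape,
      forall v, 0 < v < L -> hstrip mu (nth [::] G v.-1) v (nth 0 mu v) (nth [::] G v)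
    & Defs.eq_comp (nth [::] G L.-1) tau].

Lemma strip_chainE k w G : strip_chain mu tau k w G =
  [&& w + size G == L,
      all (fun i => hstrip mu (nth [::] (k :: G) i) (w + i) (nth 0 mu (w + i)) (nth [::] G i))
          (iota 0 (size G))
    & Defs.eq_comp (last k G) tau].
Proof.
elim: G k w => [|l G IHG] k w /=; first by rewrite addn0.
rewrite IHG addn0 (iotaDl 1 0) all_map -addSnnS.
under [in RHS]eq_all => i do rewrite /= add1n addnS -addSn add0n.
have [/eqP size_wG|] := boolP (w.+1 + size G == L); last by rewrite !andbF.
by rewrite (_ : w < L) /= ?andbA //; lia.
Qed.

Lemma partial_chain_rootP G : partial_chain mu tau root_shape 0 0 0 G <-> gt_pattern G.
Proof.
rewrite /partial_chain; split.
  case: G => [|l G] //= /andP[]; rewrite hstrip0 ?root_shape_geq ?size_root_shape //.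
  move=> /eqP ->; rewrite strip_chainE => /and3P[/eqP size_G /allP strips last_G].
  split=> //; first by case=> // v /andP[_ lt_vL]; apply: strips; rewrite mem_iota; lia.
  by rewrite -size_G /= -last_nth.
case: G => [|l G] [//= size_G -> strips last_G].
rewrite hstrip0 ?root_shape_geq ?size_root_shape // eqxx strip_chainE /=.
apply/and3P; split; first by apply/eqP; lia.
  by apply/allP => i; rewrite mem_iota => lt_i; apply: (strips i.+1); lia.
by rewrite (last_nth [::]); move: last_G; rewrite -size_G.
Qed.

Section PatternShapes.
Variable G : seq (seq nat).
Hypothesis G_gt : gt_pattern G.

Definition gt_shape (e j : nat) : nat := if e is v.+1 then nth 0 (nth [::] G v) j else 0.

Definition gt_size (e : nat) : nat := sumn (mkseq (gt_shape e) L).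

Lemma size_gt_pattern_nth v : v < L -> size (nth [::] G v) = L.
Proof.
case: G_gt => _ G_0 strips _; case: v => [|v] lt_vL; first by rewrite G_0 size_root_shape.
by have /hstripP[] := strips v.+1 lt_vL.
Qed.

Lemma gt_shape_default e j : L <= j -> gt_shape e j = 0.
Proof.
case: e => [|v] //= le_Lj; have [lt_vL|le_Lv] := ltnP v L.
  by rewrite nth_default // size_gt_pattern_nth.
by case: G_gt => size_G _ _ _; rewrite (nth_default [::]) ?nth_nil ?size_G.
Qed.

Lemma gt_shape_leS e j : e < L -> gt_shape e j <= gt_shape e.+1 j.
Proof.
move=> lt_eL; have [lt_jL|] := ltnP j L; last by move=> le_Lj; rewrite !gt_shape_default.
case: e lt_eL => [|v] lt_vL //=; case: G_gt => _ _ strips _.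
have /hstripP[_ strip _] := strips v.+1 lt_vL; have [h1 h2 _] := strip j lt_jL.
by have [/h2|/h1 ->] := leqP j v.+1.
Qed.

Lemma gt_shape_le e e' j : e <= e' <= L -> gt_shape e j <= gt_shape e' j.
Proof.
elim: e' => [|e' IHe'] /andP[le_ee' le_e'L]; first by have -> : e = 0 by lia.
have [lt_ee'|lt_e'e|->] // := ltngtP e e'.+1; last lia.
by apply: leq_trans (IHe' _) (gt_shape_leS _ _); lia.
Qed.

Lemma gt_shape_eq0 e j : e <= L -> e <= j -> gt_shape e j = 0.
Proof.
elim: e j => [|e IHe] j // le_eL le_ej; case: e IHe le_eL le_ej => [|v] IHe le_eL le_ej /=.
  by case: G_gt => _ -> _ _; rewrite nth_root_shape ifF //; lia.
have [lt_jL|] := ltnP j L; last by move=> ?; rewrite nth_default ?size_gt_pattern_nth //; lia.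
case: G_gt => _ _ strips _; have /hstripP[_ strip _] := strips v.+1 le_eL.
by have [h1 _ _] := strip j lt_jL; rewrite h1; [apply: IHe | ]; lia.
Qed.

Lemma gt_shape_interlace e j : e < L -> 0 < j -> gt_shape e.+1 j <= gt_shape e j.-1.
Proof.
move=> lt_eL j_gt0; have [le_ej|lt_je] := leqP e.+1 j; first by rewrite gt_shape_eq0.
case: e lt_eL lt_je => [|v] lt_vL lt_jv /=.
  by case: G_gt => _ -> _ _; rewrite nth_root_shape ifF //; lia.
have [lt_jL|le_Lj] := ltnP j L; last by rewrite -[nth 0 _ j]/(gt_shape v.+2 j) gt_shape_default.
case: G_gt => _ _ strips _; have /hstripP[_ strip _] := strips v.+1 lt_vL.
by have [_ _ ->] := strip j lt_jL; lia.
Qed.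

Lemma gt_shape_last j : gt_shape L j = nth 0 tau j.
Proof. by case: G_gt => _ _ _ /eq_compP <-; case: L L_gt0. Qed.

Lemma size_tau_leq : size tau <= L.
Proof.
rewrite leqNgt; apply/negP => lt_Ltau.
have := allP tau_pos _ (mem_nth 0 lt_Ltau).
by rewrite -gt_shape_last gt_shape_eq0.
Qed.

Lemma gt_shape_tau e j : e <= L -> size tau <= j -> gt_shape e j = 0.
Proof.
move=> le_eL le_tau_j; have := @gt_shape_le e L j; rewrite gt_shape_last nth_default //.
by rewrite le_eL leqnn; lia.
Qed.

Lemma gt_sizeS e : e < L -> gt_size e.+1 = gt_size e + nth 0 mu e.
Proof.
move=> lt_eL; have nth_G v : v < L -> mkseq (gt_shape v.+1) L = nth [::] G v.
  move=> lt_vL; apply: (@eq_from_nth _ 0) => [|j]; rewrite size_mkseq ?size_gt_pattern_nth //.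
  by move=> lt_jL; rewrite nth_mkseq.
rewrite /gt_size nth_G //; case: e lt_eL => [|v] lt_vL.
  by case: G_gt => _ -> _ _; rewrite /= sumn_nseq mul0n addn0 (sumn_mkseq_widen (n := 0)).
by rewrite nth_G; [case: G_gt => _ _ /(_ v.+1 lt_vL)/hstripP[] | lia].
Qed.

End PatternShapes.

Definition gt_entries (G : seq (seq nat)) (j : nat) : seq nat :=
  flatten (mkseq (fun i => nseq (gt_shape G i.+1 j - gt_shape G i j) i.+1) L).

Definition gt_row (G : seq (seq nat)) (j : nat) : seq nat := sort leq (gt_entries G j).

Definition tableau_of_gt (G : seq (seq nat)) : seq (seq nat) := mkseq (gt_row G) (size tau).

Definition weight (x : nat) : nat := if x is k.+1 then nth 0 mu k else 0.

Lemma count_gt_entries G x j : count_mem x (gt_entries G j) =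
  if 0 < x <= L then gt_shape G x j - gt_shape G x.-1 j else 0.
Proof.
rewrite /gt_entries count_flatten /mkseq -map_comp; case: x => [|x] /=.
  rewrite (_ : map _ _ = mkseq (fun i => (i == L) * 0) L) ?sumn_mkseq_delta ?ltnn //.
  by apply: eq_map => i /=; rewrite count_nseq /= muln0.
rewrite (_ : map _ _ = mkseq (fun i => (i == x) * (gt_shape G i.+1 j - gt_shape G i j)) L).
  by rewrite sumn_mkseq_delta.
by apply: eq_map => i /=; rewrite count_nseq /= eqSS.
Qed.

Lemma mem_gt_entries G j x : x \in gt_entries G j -> 0 < x <= L.
Proof. by rewrite -has_pred1 has_count count_gt_entries; case: ifP. Qed.

Lemma count_gt_row G j (a : pred nat) : count a (gt_row G j) = count a (gt_entries G j).
Proof. exact/permP/permEl/perm_sort. Qed.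

Lemma mem_gt_row G j x : (x \in gt_row G j) = (x \in gt_entries G j).
Proof. by rewrite mem_sort. Qed.

Lemma gt_row_sorted G j : sorted leq (gt_row G j).
Proof. exact/sort_sorted/leq_total. Qed.

Section PatternTableau.
Variable G : seq (seq nat).
Hypothesis G_gt : gt_pattern G.

Lemma count_le_gt_row w j : count_le w (gt_row G j) = gt_shape G (minn w L) j.
Proof.
rewrite /count_le count_gt_row -/(count_le _ _); elim: w => [|w IHw].
  by rewrite count_le0 count_gt_entries min0n.
rewrite count_leS IHw count_gt_entries /=.
have [le_wL|lt_Lw] := leqP w.+1 L.
  by rewrite (minn_idPl (ltnW le_wL)) -/(gt_shape G w.+1 j) subnKC ?gt_shape_leS.
by rewrite addn0 (minn_idPr (lt_Lw : L <= w)).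
Qed.

Lemma size_gt_row j : size (gt_row G j) = nth 0 tau j.
Proof.
rewrite -(count_le_size (w := L)) => [|x]; last by rewrite mem_gt_row => /mem_gt_entries; lia.
by rewrite count_le_gt_row minnn gt_shape_last.
Qed.

Lemma gt_row_col_strict i p : p < size (gt_row G i.+1) ->
  nth 0 (gt_row G i) p < nth 0 (gt_row G i.+1) p.
Proof.
have count_le_rows w : count_le w.+1 (gt_row G i.+1) <= count_le w (gt_row G i).
  rewrite !count_le_gt_row; have [le_wL|lt_Lw] := leqP w.+1 L.
    by rewrite (minn_idPl (ltnW le_wL)) gt_shape_interlace.
  rewrite (minn_idPr (lt_Lw : L <= w)) !(gt_shape_last G_gt).
  have [lt_i|le_i] := ltnP i.+1 (size tau); last by rewrite nth_default.
  exact: (elimT (sortedP 0) tau_geq i lt_i).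
have row_pos x : x \in gt_row G i.+1 -> 0 < x.
  by rewrite mem_gt_row => /mem_gt_entries /andP[].
by move=> lt_p; have [] := col_strict_count_le (gt_row_sorted G i) (gt_row_sorted G i.+1)
  count_le_rows row_pos lt_p.
Qed.

Lemma count_tableau_of_gt x : count_mem x (flatten (tableau_of_gt G)) = weight x.
Proof.
rewrite count_flatten /tableau_of_gt /mkseq -map_comp.
rewrite (_ : map _ _ = mkseq (fun j => if 0 < x <= L then gt_shape G x j - gt_shape G x.-1 j
                                        else 0) (size tau)); last first.
  by apply: eq_map => j /=; rewrite count_gt_row count_gt_entries.
case: (boolP (0 < x <= L)) => [/andP[x_gt0 le_xL]|x_out]; last first.
  rewrite (sumn_mkseq_widen (n := 0)) //.
  by case: x x_out => [|x] //=; rewrite -ltnNge => lt_Lx; rewrite nth_default.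
have gt_sizeE e : e <= L -> sumn (mkseq (gt_shape G e) (size tau)) = gt_size G e.
  move=> le_eL; rewrite /gt_size (sumn_mkseq_widen (size_tau_leq G_gt)) // => j.
  exact: gt_shape_tau.
rewrite sumn_mkseq_sub => [|j _]; last by apply: (gt_shape_le G_gt); lia.
by case: x x_gt0 le_xL => // x _ lt_xL; rewrite !gt_sizeE ?gt_sizeS ?addKn //; lia.
Qed.

Lemma tableau_of_gt_ssyt : is_ssyt tau mu (tableau_of_gt G).
Proof.
apply/and4P; split.
- apply/eqP/(@eq_from_nth _ 0) => [|j]; rewrite size_map size_mkseq // => lt_j.
  by rewrite (nth_map [::]) ?size_mkseq // nth_mkseq // size_gt_row.
- by apply/allP => r /mapP[j _ ->]; apply: gt_row_sorted.
- apply/allP => i; rewrite size_mkseq mem_iota /= => lt_i; apply/allP => p; rewrite mem_iota /=.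
  have [lt_i1|le_i1] := ltnP i.+1 (size tau); last by rewrite nth_default ?size_mkseq.
  by rewrite !nth_mkseq //; apply: gt_row_col_strict.
- by apply/allP => x _; rewrite count_tableau_of_gt.
Qed.

End PatternTableau.

Definition gt_of_tableau (T : seq (seq nat)) : seq (seq nat) :=
  mkseq (fun v => mkseq (fun j => count_le v.+1 (nth [::] T j)) L) L.

Section TableauPattern.
Variable T : seq (seq nat).
Hypothesis T_ssyt : is_ssyt tau mu T.

Lemma ssyt_shape : map size T = tau.
Proof. by case/and4P: T_ssyt => /eqP. Qed.

Lemma ssyt_row_sorted j : sorted leq (nth [::] T j).
Proof.
case/and4P: T_ssyt => _ /allP rows_sorted _ _.
by have [lt_jT|le_Tj] := ltnP j (size T); [apply/rows_sorted/mem_nth | rewrite nth_default].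
Qed.

Lemma ssyt_col_strict i p : p < size (nth [::] T i.+1) ->
  nth 0 (nth [::] T i) p < nth 0 (nth [::] T i.+1) p.
Proof.
case/and4P: T_ssyt => _ _ /allP cols _; have [lt_iT|le_Ti] := ltnP i (size T).
  have := cols i; rewrite mem_iota /= => /(_ lt_iT) /allP col_i lt_p.
  by have := col_i p; rewrite mem_iota /= => /(_ lt_p).
by rewrite (nth_default [::] (_ : size T <= i.+1)) //; lia.
Qed.

Lemma ssyt_count x : count_mem x (flatten T) = weight x.
Proof.
case/and4P: T_ssyt => _ _ _ /allP weights.
have [x_in|x_notin] := boolP (x \in flatten T).
  by apply/eqP/weights; rewrite mem_cat x_in orbT.
have [le_x_s|lt_s_x] := leqP x (sumn mu).
  by apply/eqP/weights; rewrite mem_cat mem_iota; lia.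
rewrite (_ : count_mem x _ = 0); last by apply/eqP; rewrite -leqn0 leqNgt -has_count has_pred1.
case: x {x_notin} lt_s_x => [|k] lt_k //=; rewrite nth_default //.
by have := size_leq_sumn mu_pos; lia.
Qed.

Lemma size_ssyt_row j : size (nth [::] T j) = nth 0 tau j.
Proof.
rewrite -ssyt_shape; have [lt_jT|le_Tj] := ltnP j (size T); first by rewrite (nth_map [::]).
by rewrite !nth_default ?size_map.
Qed.

Lemma size_ssyt_rowS j : size (nth [::] T j.+1) <= size (nth [::] T j).
Proof.
rewrite !size_ssyt_row; have [lt_j|le_j] := ltnP j.+1 (size tau); last by rewrite nth_default.
exact: (elimT (sortedP 0) tau_geq j lt_j).
Qed.

Lemma ssyt_entry j x : x \in nth [::] T j -> 0 < x <= L.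
Proof.
move=> x_in; have [lt_jT|le_Tj] := ltnP j (size T); last by rewrite nth_default in x_in.
have : 0 < count_mem x (flatten T).
  by rewrite -has_count has_pred1; apply/flattenP; exists (nth [::] T j); rewrite ?mem_nth.
rewrite ssyt_count; case: x {x_in} => [|k] //= k_gt0.
by have [lt_kL|le_Lk] := ltnP k L; [lia | rewrite nth_default in k_gt0].
Qed.

Lemma ssyt_entry_gt j x : x \in nth [::] T j -> j < x.
Proof.
elim: j x => [|j IHj] x; first by move/ssyt_entry; lia.
case/(nthP 0) => p lt_p <-.
have lt_p' : p < size (nth [::] T j) := leq_trans lt_p (size_ssyt_rowS j).
exact: leq_ltn_trans (IHj _ (mem_nth 0 lt_p')) (ssyt_col_strict lt_p).
Qed.

Lemma size_ssyt : size T <= L.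
Proof.
rewrite leqNgt; apply/negP => lt_LT.
have row_gt0 : 0 < size (nth [::] T L).
  by rewrite size_ssyt_row; apply/(allP tau_pos)/mem_nth; rewrite -ssyt_shape size_map.
by have := ssyt_entry_gt (mem_nth 0 row_gt0); have := ssyt_entry (mem_nth 0 row_gt0); lia.
Qed.

Lemma gt_shape_of_tableau e j : e <= L ->
  gt_shape (gt_of_tableau T) e j = count_le e (nth [::] T j).
Proof.
case: e => [|v] le_vL /=; first by rewrite count_le_eq0 // => x /ssyt_entry; lia.
rewrite nth_mkseq //; have [lt_jL|le_Lj] := ltnP j L; first by rewrite nth_mkseq.
rewrite nth_default ?size_mkseq // (nth_default [::]) //.
by have := size_ssyt; lia.
Qed.

Lemma sumn_gt_of_tableau v : v < L ->
  sumn (nth [::] (gt_of_tableau T) v) = count_le v.+1 (flatten T).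
Proof.
move=> lt_vL; rewrite nth_mkseq // (sumn_mkseq_widen size_ssyt) => [|j le_Tj]; last first.
  by rewrite nth_default.
by rewrite /count_le count_flatten -[in RHS](mkseq_nth [::] T) /mkseq -map_comp.
Qed.

Lemma count_le_ssytS w : count_le w.+1 (flatten T) = count_le w (flatten T) + nth 0 mu w.
Proof. by rewrite count_leS ssyt_count. Qed.

Lemma count_le0_ssyt : count_le 0 (flatten T) = 0.
Proof. by rewrite count_le0 ssyt_count. Qed.

Lemma nth_gt_of_tableau0 : nth [::] (gt_of_tableau T) 0 = root_shape.
Proof.
apply: (@eq_from_nth _ 0); rewrite ?size_root_shape // nth_mkseq ?size_mkseq // => j lt_jL.
rewrite nth_mkseq // nth_root_shape; case: j lt_jL => [|j] lt_jL /=; last first.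
  by rewrite count_le_eq0 // => x /ssyt_entry_gt; lia.
have := sumn_gt_of_tableau L_gt0; rewrite count_le_ssytS count_le0_ssyt add0n nth_mkseq // => <-.
rewrite (sumn_mkseq_widen (n := 1)) //= ?addn0 // => -[|j] // _.
by rewrite count_le_eq0 // => x /ssyt_entry_gt; lia.
Qed.

Lemma hstrip_gt_of_tableau v : 0 < v < L ->
  hstrip mu (nth [::] (gt_of_tableau T) v.-1) v (nth 0 mu v) (nth [::] (gt_of_tableau T) v).
Proof.
case: v => // v /andP[_ lt_vL]; apply/hstripP; split; first by rewrite nth_mkseq ?size_mkseq.
  move=> j lt_jL; rewrite /= !nth_mkseq //; try lia; split.
  - by move=> lt_vj; rewrite !count_le_eq0 // => x /ssyt_entry_gt; lia.
  - by move=> _; apply: leq_count_le.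
  - case: j lt_jL => // j lt_jL /andP[_ le_jv] /=.
    apply: count_le_col_strict; rewrite ?ssyt_row_sorted ?size_ssyt_rowS //.
    exact: ssyt_col_strict.
by rewrite /= !sumn_gt_of_tableau ?count_le_ssytS //; lia.
Qed.

Lemma gt_of_tableau_last : Defs.eq_comp (nth [::] (gt_of_tableau T) L.-1) tau.
Proof.
apply/eq_compP => i; have [lt_iL|le_Li] := ltnP i L.
  rewrite nth_mkseq ?prednK ?nth_mkseq //; try lia.
  by rewrite count_le_size ?size_ssyt_row // => x /ssyt_entry; lia.
rewrite (nth_default 0 (s := nth [::] (gt_of_tableau T) L.-1)); last first.
  by rewrite nth_mkseq ?size_mkseq; lia.
by rewrite nth_default //; have := size_ssyt; rewrite -ssyt_shape size_map; lia.
Qed.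

Lemma gt_of_tableau_pattern : gt_pattern (gt_of_tableau T).
Proof.
split; [exact: size_mkseq | exact: nth_gt_of_tableau0 | exact: hstrip_gt_of_tableau |].
exact: gt_of_tableau_last.
Qed.

Lemma tableau_of_gtK : tableau_of_gt (gt_of_tableau T) = T.
Proof.
have size_T : size tau = size T by rewrite -ssyt_shape size_map.
apply: (@eq_from_nth _ [::]); rewrite size_mkseq // => j lt_j.
rewrite nth_mkseq //; apply: (sorted_eq leq_trans anti_leq (gt_row_sorted _ _) (ssyt_row_sorted j)).
rewrite /gt_row perm_sort; apply/allP => x _; apply/eqP; rewrite count_gt_entries.
case: (boolP (0 < x <= L)) => [/andP[x_gt0 le_xL]|x_out].
  rewrite !gt_shape_of_tableau; try lia.
  by case: x x_gt0 le_xL => // x _ _; rewrite count_leS addKn.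
apply/esym/eqP; rewrite -leqn0 leqNgt -has_count has_pred1; apply/negP => /ssyt_entry.
exact/negP.
Qed.
End TableauPattern.

Lemma gt_of_tableauK G : gt_pattern G -> gt_of_tableau (tableau_of_gt G) = G.
Proof.
move=> G_gt; have [size_G _ _ _] := G_gt.
apply: (@eq_from_nth _ [::]); rewrite size_mkseq // => v lt_vL.
rewrite nth_mkseq //; apply: (@eq_from_nth _ 0) => [|j]; rewrite size_mkseq ?size_gt_pattern_nth //.
move=> lt_jL; rewrite nth_mkseq //; have [lt_j_tau|le_tau_j] := ltnP j (size tau).
  by rewrite nth_mkseq // count_le_gt_row // (minn_idPl lt_vL).
by rewrite nth_default ?size_mkseq // -/(gt_shape G v.+1 j) gt_shape_tau.
Qed.

Lemma ssyt_gt_bij : pred_bij (is_ssyt tau mu) (partial_chain mu tau root_shape 0 0 0).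
Proof.
exists gt_of_tableau, tableau_of_gt; split.
- by move=> T T_ssyt; apply/partial_chain_rootP/gt_of_tableau_pattern.
- by move=> G /partial_chain_rootP G_gt; apply: tableau_of_gt_ssyt.
- by move=> T T_ssyt; apply: tableau_of_gtK.
- by move=> G /partial_chain_rootP G_gt; apply: gt_of_tableauK.
Qed.
End Patterns.

Lemma terminal_tt_bij (mu tau : seq nat) : 0 < size mu ->
  pred_bij (terminal_tt mu tau) (partial_chain mu tau (root_shape mu) 0 0 0).
Proof.
move=> L_gt0; have root_state : tree_state mu (root_shape mu) 0 0 0.
  split=> //; [exact: size_root_shape | exact: root_shape_geq | ].
  by move=> j j_gt0; rewrite nth_root_shape ifF //; lia.
have root_comp : comp_label mu (root_shape mu) 0 0 0 = mu.
  apply: (@eq_from_nth _ 0) => [|j]; rewrite size_comp_label // => lt_jL.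
  by rewrite nth_comp_label // nth_root_shape; case: j lt_jL => [|j] _ /=; rewrite ?muln0 ?addn0.
by have := terminal_below_bij tau root_state; rewrite root_comp.
Qed.

Unset Implicit Arguments.
Theorem lemma6p18 (s : nat) (mu tau : seq nat) :
  partition_of s mu -> partition_of s tau ->
  exists f : terminal_vertex mu tau -> SStd tau mu, bijective f.
Proof.
move=> /and3P[_ mu_pos /eqP sum_mu] /and3P[tau_geq tau_pos /eqP sum_tau].
apply: pred_bij_sig; have [/eqP|L_gt0] := posnP (size mu); last first.
  exact: pred_bij_trans (terminal_tt_bij tau L_gt0)
                        (pred_bij_sym (ssyt_gt_bij mu_pos tau_pos tau_geq L_gt0)).
rewrite size_eq0 => /eqP mu_nil; have : size tau <= 0.
  by rewrite (leq_trans (size_leq_sumn tau_pos)) // sum_tau -sum_mu mu_nil.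
rewrite leqn0 size_eq0 => /eqP tau_nil; subst mu tau.
by apply: eq_pred_bij (pred_bij1 [::] [::] true) => [[]|[]].
Qed.
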